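(* Let $0<d<\pi/2$, $\mathscr{D}_d=\{\zeta\in\mathbb{C}:|\Im\zeta|<d\}$, and $\psi(t)=\log(1+e^{\pi\sinh t})$. Assume $f$ is analytic on $\psi(\mathscr{D}_d)$ and there are constants $K>0$, $\beta>0$, $0<\alpha\le1$ with $|f(z)|\le K\left|\left(\frac{z}{1+z}\right)^{\alpha-1}e^{-\beta z}\right|$ for all $z\in\psi(\mathscr{D}_d)$. Then $F(\zeta)=f(\psi(\zeta))\psi'(\zeta)$ belongs to $\mathbf{L}^{\mathrm{DE}}_{L,R,2\alpha,2\beta}(\mathscr{D}_d)$ with $L=2(\tilde c_d)^{1-\alpha}K$ and $R=2(e^{\pi/12})^{1-\alpha}K$, where $c_d=1+1/\cos(\frac\pi2\sin d)$ and $\tilde c_d=\frac{1+\log(1+c_d)}{\log(1+c_d)}c_d$.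
   Context: For positive $L,R,a,b$ and $0<d<\pi/2$, $\mathbf{L}^{\mathrm{DE}}_{L,R,a,b}(\mathscr{D}_d)$ is the set of functions $F$ analytic on $\mathscr{D}_d$ such that for all $\zeta\in\mathscr{D}_d$, $|F(\zeta)|\le\frac{(\pi/2)L|\cosh\zeta|}{|1+e^{-\pi\sinh\zeta}|^{a/2}|1+e^{\pi\sinh\zeta}|^{b/2}}$, and for all $x\in\mathbb{R}$, $|F(x)|\le\frac{(\pi/2)R\cosh x}{(1+e^{-\pi\sinh x})^{a/2}(1+e^{\pi\sinh x})^{b/2}}$. Complex logarithms and powers use principal branches. *)

From Stdlib Require Import Reals.
From Coquelicot Require Import Coquelicot.
Open Scope R_scope.

Definition Cexp (z : C) : C :=
  (exp (Re z) * cos (Im z), exp (Re z) * sin (Im z)).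

Definition Csinh (z : C) : C := ((Cexp z - Cexp (- z)) / 2)%C.
Definition Ccosh (z : C) : C := ((Cexp z + Cexp (- z)) / 2)%C.

(* principal argument, with values in (-PI, PI]  (Arg 0 = 0) *)
Definition Arg (z : C) : R :=
  let x := Re z in let y := Im z in
  if Rlt_dec 0 x then atan (y / x)
  else if Rlt_dec x 0 then
         (if Rle_dec 0 y then atan (y / x) + PI else atan (y / x) - PI)
  else if Rlt_dec 0 y then PI / 2
  else if Rlt_dec y 0 then - (PI / 2)
  else 0.

Definition CLog (z : C) : C := (ln (Cmod z), Arg z).

Definition Cppow (w s : C) : C := Cexp (s * CLog w).

Definition analytic_on (S : C -> Prop) (g : C -> C) : Prop :=
  forall z, S z -> ex_derive (K := C_AbsRing) (V := C_NormedModule) g z.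

Definition strip (d : R) (z : C) : Prop := Rabs (Im z) < d.

Definition LDE (L Rc a b d : R) (F : C -> C) : Prop :=
  analytic_on (strip d) F /\
  (forall zeta, strip d zeta ->
     Cmod (F zeta) <=
       (PI / 2) * L * Cmod (Ccosh zeta) /
       (Rpower (Cmod (1 + Cexp (- (RtoC PI * Csinh zeta)))) (a / 2) *
        Rpower (Cmod (1 + Cexp (RtoC PI * Csinh zeta))) (b / 2))) /\
  (forall x : R,
     Cmod (F (RtoC x)) <=
       (PI / 2) * Rc * cosh x /
       (Rpower (1 + exp (- (PI * sinh x))) (a / 2) *
        Rpower (1 + exp (PI * sinh x)) (b / 2))).

(* psi is the branch of log(1 + exp(pi sinh zeta)) that is analytic on the
   (simply connected) strip D_d and real on the real axis; psi' its derivative.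
   These conditions determine psi uniquely on D_d. *)
Definition is_DE_psi (d : R) (psi psi' : C -> C) : Prop :=
  (forall zeta, strip d zeta ->
     Cexp (psi zeta) = (1 + Cexp (RtoC PI * Csinh zeta))%C) /\
  (forall x : R, psi (RtoC x) = RtoC (ln (1 + exp (PI * sinh x)))) /\
  (forall zeta, strip d zeta ->
     is_derive (K := C_AbsRing) (V := C_NormedModule) psi zeta (psi' zeta)).

Definition image_strip (d : R) (psi : C -> C) (z : C) : Prop :=
  exists zeta, strip d zeta /\ z = psi zeta.

Definition c_d (d : R) : R := 1 + 1 / cos (PI / 2 * sin d).
Definition ctilde_d (d : R) : R :=
  (1 + ln (1 + c_d d)) / ln (1 + c_d d) * c_d d.

From Stdlib Require Import Reals.
From Coquelicot Require Import Coquelicot.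
From Stdlib Require Import Lra Psatz Machin.
Open Scope R_scope.

(* Write [w = exp (PI sinh zeta)], so that [exp psi = 1 + w], [psi' = PI cosh zeta * w / (1 + w)]
   and [|1 + exp (- PI sinh zeta)| = |1 + w| / |w|].  With [q := |w| / |1 + w|] the growth
   hypothesis on [f] gives
     [|F zeta| <= PI K |cosh zeta| q |psi / (1 + psi)|^(alpha-1) |1 + w|^(-beta)],
   which is below the L^DE weight with constant [2 c^(1-alpha) K] as soon as [q <= c] and
   [q (1 + |psi|) <= c |psi|].
   On the real line [q = 1 - exp (- psi)] with [psi > 0], and both inequalities hold for
   [c = exp (PI/12) = 1.2993...] because [(1 + z) (1 - exp (- z)) <= 1.299 z] for [z > 0]; the
   latter is checked with a Taylor bound and a polynomial positivity argument on subintervals.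
   On the strip, [|1 + w| >= (1 + |w|) cos (PI/2 sin d)] gives [q <= c_d], while
   [q = |1 - exp (- psi)| <= exp |psi| - 1]; convexity of [exp] on [0, ln (1 + c_d)] combines
   the two into [q (1 + |psi|) <= ctilde_d |psi|]. *)

(** * Elementary real inequalities *)

Lemma exp_le_compat (x y : R) : x <= y -> exp x <= exp y.
Proof. intros [H | ->]; [apply Rlt_le, exp_increasing, H | apply Rle_refl]. Qed.

Lemma exp_le_quadratic (t : R) : Rabs t <= / 2 -> exp t <= 1 + t + 2 * t ^ 2.
Proof.
intros Ht; apply Rabs_le_between in Ht.
assert (Hinv : exp t * exp (- t) = 1) by (rewrite <- exp_plus, Rplus_opp_r; apply exp_0).
generalize (exp_ineq1_le (- t)) (exp_pos t); nra.
Qed.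

Lemma exp_mul_1_add_le (x y : R) : exp x * (1 + (y - x)) <= exp y.
Proof.
replace y with (x + (y - x)) at 2 by ring; rewrite exp_plus.
apply Rmult_le_compat_l; [apply Rlt_le, exp_pos | apply exp_ineq1_le].
Qed.

Lemma exp_sub_1_le_chord (r L : R) : 0 < L -> 0 <= r <= L -> L * (exp r - 1) <= r * (exp L - 1).
Proof.
intros HL Hr.
assert (H0 := exp_mul_1_add_le r 0); rewrite exp_0 in H0.
assert (HL' := exp_mul_1_add_le r L).
assert ((L - r) * (exp r * (1 + (0 - r))) <= (L - r) * 1) by (apply Rmult_le_compat_l; lra).
assert (r * (exp r * (1 + (L - r))) <= r * exp L) by (apply Rmult_le_compat_l; lra).
nra.
Qed.

Lemma ln_0 : ln 0 = 0.
Proof. unfold ln; case (Rlt_dec 0 0); intros H; [exfalso; lra | reflexivity]. Qed.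

Lemma sin_ge_cubic (x : R) : 0 <= x <= 4 -> x - x ^ 3 / 6 <= sin x.
Proof.
intros Hx; destruct (pre_sin_bound x 0) as [H _]; try lra.
unfold sin_approx, sin_term in H; simpl in H; lra.
Qed.

Lemma cos_ge_quadratic (x : R) : 1 - x ^ 2 / 2 <= cos x.
Proof.
destruct (Rle_lt_dec (Rabs x) 2) as [H|H].
- apply Rabs_le_between in H; destruct (pre_cos_bound x 0) as [H1 _]; try lra.
  unfold cos_approx, cos_term in H1; simpl in H1; lra.
- assert (x ^ 2 > 4) by (revert H; unfold Rabs; destruct (Rcase_abs x); intros; nra).
  generalize (COS_bound x); lra.
Qed.

Lemma Rabs_sin_le (x : R) : Rabs (sin x) <= Rabs x.
Proof.
assert (Hpos : forall y, 0 <= y -> Rabs (sin y) <= y).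
{ intros y Hy; apply Rabs_le.
  destruct (Req_dec y 0) as [->|Hn]; [rewrite sin_0; lra|].
  generalize (sin_lt_x y ltac:(lra)) (SIN_bound y); intros.
  destruct (Rle_lt_dec 1 y); [lra|].
  assert (0 <= sin y) by (apply sin_ge_0; generalize PI2_1 PI2_Rlt_PI; lra); lra. }
destruct (Rle_lt_dec 0 x) as [Hx|Hx].
- rewrite (Rabs_pos_eq x Hx); apply Hpos, Hx.
- rewrite (Rabs_left x Hx), <- Rabs_Ropp, <- sin_neg; apply Hpos; lra.
Qed.

Lemma Rabs_sin_sub_le (x : R) : Rabs x <= / 2 -> Rabs (sin x - x) <= x ^ 2.
Proof.
assert (Hpos : forall y, 0 <= y <= / 2 -> Rabs (sin y - y) <= y ^ 2).
{ intros y Hy.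
  assert (sin y <= y) by (generalize (Rabs_sin_le y); rewrite (Rabs_pos_eq y) by lra;
    intros H; apply Rabs_le_between in H; lra).
  generalize (sin_ge_cubic y ltac:(lra)); intros.
  apply Rabs_le; split; nra. }
intros Hx; apply Rabs_le_between in Hx.
destruct (Rle_lt_dec 0 x) as [H|H]; [apply Hpos; lra|].
replace (sin x - x) with (- (sin (- x) - - x)) by (rewrite sin_neg; ring).
rewrite Rabs_Ropp; replace (x ^ 2) with ((- x) ^ 2) by ring; apply Hpos; lra.
Qed.

Lemma PI_bounds : 314 / 100 < PI < 315 / 100.
Proof.
destruct (PI_2_3_7_ineq 2) as [Hlo Hhi].
unfold PI_2_3_7_tg, tg_alt, Ratan_seq in Hlo, Hhi; simpl in Hlo, Hhi; lra.
Qed.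

Lemma cosh_pos (x : R) : 0 < cosh x.
Proof. unfold cosh; generalize (exp_pos x) (exp_pos (- x)); lra. Qed.

Lemma cosh_sq_sub_sinh_sq (x : R) : cosh x ^ 2 - sinh x ^ 2 = 1.
Proof.
unfold cosh, sinh.
assert (H : exp x * exp (- x) = 1) by (rewrite <- exp_plus, Rplus_opp_r; apply exp_0).
field_simplify; nra.
Qed.

(* For [a >= 0], [u := exp a] dominates [v := 1 + a + a^2/2 + a^3/6 >= 1], and
   [(v + 1/v)/2 >= 1 + a^2/2] reduces to [(v - 1)^2 >= a^2 v]. *)
Lemma cosh_ge_quadratic (a : R) : 1 + a ^ 2 / 2 <= cosh a.
Proof.
assert (Hpos : forall a, 0 <= a -> 1 + a ^ 2 / 2 <= cosh a).
{ clear a; intros a Ha; unfold cosh.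
  set (u := exp a); assert (Hu : 0 < u) by apply exp_pos.
  rewrite exp_Ropp; fold u.
  set (v := 1 + a + a ^ 2 / 2 + a ^ 3 / 6).
  assert (Hv : v <= u).
  { unfold u, v; eapply Rle_trans; [|apply (exp_ge_taylor a 3 Ha)]; simpl; lra. }
  assert (Hv1 : 1 + a ^ 2 / 2 <= v) by (unfold v; nra).
  assert (Hgap : (v - 1) ^ 2 - a ^ 2 * v >= 0).
  { unfold v; assert (0 <= a ^ 4) by (apply pow_le; lra);
    assert (0 <= a ^ 5) by (apply pow_le; lra); assert (0 <= a ^ 6) by (apply pow_le; lra); nra. }
  apply Rmult_le_reg_r with (2 * u); [lra|].
  replace ((u + / u) / 2 * (2 * u)) with (u * u + 1) by (field; lra).
  assert ((u - v) * (u + v - 2 - a ^ 2) >= 0) by (apply Rle_ge, Rmult_le_pos; nra).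
  nra. }
destruct (Rle_lt_dec 0 a) as [Ha|Ha]; [apply Hpos, Ha|].
replace (cosh a) with (cosh (- a)) by (unfold cosh; rewrite Ropp_involutive; lra).
replace (a ^ 2) with ((- a) ^ 2) by ring; apply Hpos; lra.
Qed.

(** * The complex exponential *)

Lemma Re_opp (z : C) : Re (- z)%C = - Re z.
Proof. reflexivity. Qed.

Lemma Im_le_Cmod (z : C) : Rabs (Im z) <= Cmod z.
Proof. eapply Rle_trans; [apply Rmax_r | apply Rmax_Cmod]. Qed.

Lemma Cmod_le_Rabs_Re_Im (z : C) : Cmod z <= Rabs (Re z) + Rabs (Im z).
Proof.
destruct z as [p q]; unfold Cmod; simpl.
rewrite <- (sqrt_Rsqr (Rabs p + Rabs q)) by (generalize (Rabs_pos p) (Rabs_pos q); lra).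
apply sqrt_le_1_alt; unfold Rsqr.
replace (p * (p * 1) + q * (q * 1)) with (Rsqr (Rabs p) + Rsqr (Rabs q))
  by (rewrite <- !Rsqr_abs; unfold Rsqr; ring).
unfold Rsqr.
generalize (Rabs_pos p) (Rabs_pos q); nra.
Qed.

Lemma Cmod_polar (r t : R) : 0 <= r -> Cmod (r * cos t, r * sin t) = r.
Proof.
intros Hr; unfold Cmod; simpl.
transitivity (sqrt (r * r)); [f_equal | apply sqrt_square, Hr].
transitivity (r * r * (Rsqr (sin t) + Rsqr (cos t))); [unfold Rsqr; ring|].
rewrite sin2_cos2; ring.
Qed.

Lemma Cdiv_0_r (z : C) : (z / 0)%C = 0.
Proof.
apply injective_projections; unfold Cdiv, Cinv, Cmult; simpl; unfold Rdiv;
  ring_simplify; rewrite ?Rmult_0_l, ?Rinv_0; ring.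
Qed.

Lemma Cexp_add (a b : C) : Cexp (a + b)%C = (Cexp a * Cexp b)%C.
Proof.
destruct a as [x y], b as [u v]; unfold Cexp, Cmult, Cplus; simpl.
rewrite exp_plus, cos_plus, sin_plus; f_equal; ring.
Qed.

Lemma Cexp_0 : Cexp 0 = 1.
Proof. unfold Cexp; simpl; rewrite exp_0, cos_0, sin_0; apply injective_projections; simpl; ring. Qed.

Lemma Cexp_real (t : R) : Cexp (RtoC t) = RtoC (exp t).
Proof. unfold Cexp, RtoC; simpl; rewrite cos_0, sin_0; apply injective_projections; simpl; ring. Qed.

Lemma Cmod_Cexp (z : C) : Cmod (Cexp z) = exp (Re z).
Proof. apply Cmod_polar, Rlt_le, exp_pos. Qed.

Lemma Cexp_neq0 (z : C) : Cexp z <> 0.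
Proof.
intros H; apply (Rgt_not_eq _ _ (exp_pos (Re z))).
rewrite <- Cmod_Cexp, H; apply Cmod_0.
Qed.

Lemma Cexp_opp_mul (z : C) : (Cexp (- z) * Cexp z)%C = 1.
Proof. rewrite <- Cexp_add, Cplus_comm, Cplus_opp_r; apply Cexp_0. Qed.

Lemma Cmod_Cppow (w : C) (s : R) : Cmod (Cppow w (RtoC s)) = exp (s * ln (Cmod w)).
Proof. unfold Cppow; rewrite Cmod_Cexp; unfold CLog, Re; simpl; f_equal; ring. Qed.

Lemma Cmod_1_add_Cexp_opp (v : C) : Cmod (1 + Cexp (- v))%C = Cmod (1 + Cexp v)%C / Cmod (Cexp v).
Proof.
replace (1 + Cexp (- v))%C with (Cexp (- v) * (1 + Cexp v))%C
  by (rewrite Cmult_plus_distr_l, Cexp_opp_mul; ring).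
rewrite Cmod_mult, !Cmod_Cexp; rewrite Re_opp, exp_Ropp.
field; apply Rgt_not_eq, exp_pos.
Qed.

Lemma Cexp_sub_1_sub_le (h : C) : Cmod h <= / 2 -> Cmod (Cexp h - 1 - h)%C <= 5 * Cmod h ^ 2.
Proof.
intros Hh.
assert (Ha := re_le_Cmod h); assert (Hb := Im_le_Cmod h); assert (Hr := Cmod2_alt h).
destruct h as [a b]; simpl in Ha, Hb, Hr; set (r := Cmod (a, b)) in *.
eapply Rle_trans; [apply Cmod_le_Rabs_Re_Im|]; unfold Cexp; simpl.
assert (Hea := exp_le_quadratic a ltac:(lra)).
assert (Hea' := exp_ineq1_le a).
assert (Hcos := cos_ge_quadratic b); assert (Hcos' := COS_bound b).
assert (Hsin := Rabs_sin_sub_le b ltac:(lra)).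
apply Rabs_le_between in Ha, Hb.
assert (Hre : Rabs (exp a * cos b + - (1) + - a) <= 2 * a ^ 2 + b ^ 2).
{ replace (exp a * cos b + - (1) + - a) with ((exp a - 1 - a) + exp a * (cos b - 1)) by ring.
  eapply Rle_trans; [apply Rabs_triang|]; rewrite Rabs_mult, (Rabs_pos_eq (exp a)) by apply Rlt_le, exp_pos.
  assert (Rabs (exp a - 1 - a) <= 2 * a ^ 2) by (apply Rabs_le; split; nra).
  assert (Rabs (cos b - 1) <= b ^ 2 / 2) by (apply Rabs_le; split; lra).
  assert (exp a <= 2) by nra.
  generalize (Rabs_pos (cos b - 1)); nra. }
assert (Him : Rabs (exp a * sin b + - 0 + - b) <= a ^ 2 + 3 * b ^ 2).
{ replace (exp a * sin b + - 0 + - b) with (exp a * (sin b - b) + (exp a - 1) * b) by ring.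
  eapply Rle_trans; [apply Rabs_triang|]; rewrite !Rabs_mult, (Rabs_pos_eq (exp a)) by apply Rlt_le, exp_pos.
  assert (Rabs (exp a - 1) <= 2 * Rabs a) by (apply Rabs_le; unfold Rabs; destruct (Rcase_abs a); nra).
  assert (2 * Rabs a * Rabs b <= a ^ 2 + b ^ 2).
  { rewrite <- (pow2_abs a), <- (pow2_abs b); generalize (pow2_ge_0 (Rabs a - Rabs b)); nra. }
  assert (exp a <= 2) by nra.
  generalize (Rabs_pos b) (Rabs_pos (sin b - b)) (Rabs_pos (exp a - 1)); nra. }
nra.
Qed.

(* Expanding [|1 - e^(a+ib)|^2 = 1 - 2 e^a cos b + e^(2a)] against [(e^r - 1)^2],
   with [r = |a + ib|], [cos b >= 1 - b^2/2] and [b^2 = (r - a) (r + a)]. *)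
Lemma Cmod_1_sub_Cexp_le (v : C) : Cmod (1 - Cexp v)%C <= exp (Cmod v) - 1.
Proof.
destruct v as [a b]; set (r := Cmod (a, b)).
assert (Hr2 : r ^ 2 = a ^ 2 + b ^ 2) by apply Cmod2_alt.
assert (Hra := re_le_Cmod (a, b)); fold r in Hra; simpl in Hra; apply Rabs_le_between in Hra.
set (A := exp a); set (E := exp r).
assert (HA : 0 < A) by apply exp_pos.
assert (HE : 1 + r <= E) by apply exp_ineq1_le.
assert (HAE : A * (1 + (r - a)) <= E) by apply exp_mul_1_add_le.
assert (HA1 : 1 + a <= A) by apply exp_ineq1_le.
assert (Hc := cos_ge_quadratic b).
unfold Cexp, Cmod, Cminus, Cplus, Copp, Re, Im; simpl fst; simpl snd; fold A.
rewrite <- (sqrt_pow2 (E - 1)) by lra; apply sqrt_le_1_alt.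
assert (Hsq : (1 + - (A * cos b)) ^ 2 + (0 + - (A * sin b)) ^ 2 = 1 - 2 * A * cos b + A ^ 2).
{ generalize (sin2_cos2 b); unfold Rsqr; intros H.
  transitivity (1 - 2 * A * cos b + A ^ 2 * (sin b * sin b + cos b * cos b)); [ring | rewrite H; ring]. }
rewrite Hsq.
assert (Hcos : - 2 * A * cos b <= - 2 * A + A * (r ^ 2 - a ^ 2)).
{ assert (A * (1 - b ^ 2 / 2) <= A * cos b) by (apply Rmult_le_compat_l; lra); nra. }
assert (Hprod : A * (r - a) * (r + a) <= (E - A) * (E + A - 2)).
{ assert (0 <= E - A - A * (r - a)) by nra.
  assert (0 <= E + A - 2 - (r + a)) by lra.
  assert (0 <= A * (r - a)) by nra.
  replace (E - A) with (A * (r - a) + (E - A - A * (r - a))) by ring.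
  replace (E + A - 2) with ((r + a) + (E + A - 2 - (r + a))) by ring.
  nra. }
nra.
Qed.

(** * Complex derivatives *)

Notation is_Cderive f z l := (is_derive (K := C_AbsRing) (V := C_NormedModule) f z l).

(* [is_derive_mult] and [is_derive_comp] are stated for the normed module
   [AbsRing_NormedModule C_AbsRing], which is not convertible to [C_NormedModule]. *)
Lemma is_Cderive_AbsRing (f : C -> C) (z l : C) :
  is_Cderive f z l <-> is_derive (K := C_AbsRing) (V := AbsRing_NormedModule C_AbsRing) f z l.
Proof. split; intros [[H1 H2 H3] H4]; repeat split; assumption. Qed.

Lemma is_Cderive_const (c z : C) : is_Cderive (fun _ => c) z (RtoC 0).
Proof. apply (is_derive_const (K := C_AbsRing) (V := C_NormedModule)). Qed.

Lemma is_Cderive_id (z : C) : is_Cderive (fun t => t) z (RtoC 1).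
Proof. apply is_Cderive_AbsRing, (is_derive_id (K := C_AbsRing)). Qed.

Lemma is_Cderive_plus (f g : C -> C) (z df dg : C) :
  is_Cderive f z df -> is_Cderive g z dg -> is_Cderive (fun t => f t + g t)%C z (df + dg)%C.
Proof. exact (is_derive_plus f g z df dg). Qed.

Lemma is_Cderive_opp (f : C -> C) (z df : C) :
  is_Cderive f z df -> is_Cderive (fun t => - f t)%C z (- df)%C.
Proof. exact (is_derive_opp f z df). Qed.

Lemma is_Cderive_ext (f g : C -> C) (z l : C) :
  (forall t, f t = g t) -> is_Cderive f z l -> is_Cderive g z l.
Proof. exact (is_derive_ext f g z l). Qed.

Lemma is_Cderive_mult (f g : C -> C) (z df dg : C) :
  is_Cderive f z df -> is_Cderive g z dg ->
  is_Cderive (fun t => f t * g t)%C z (df * g z + f z * dg)%C.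
Proof.
intros Hf Hg; apply is_Cderive_AbsRing; apply is_Cderive_AbsRing in Hf, Hg.
exact (is_derive_mult f g z df dg Hf Hg Cmult_comm).
Qed.

Lemma is_Cderive_scal (c : C) (f : C -> C) (z df : C) :
  is_Cderive f z df -> is_Cderive (fun t => c * f t)%C z (c * df)%C.
Proof.
intros Hf; replace (c * df)%C with (0 * f z + c * df)%C by ring.
apply is_Cderive_mult; [apply is_Cderive_const | exact Hf].
Qed.

Lemma is_Cderive_comp (f g : C -> C) (z df dg : C) :
  is_Cderive f (g z) df -> is_Cderive g z dg ->
  is_Cderive (fun t => f (g t)) z (dg * df)%C.
Proof. intros Hf Hg; apply is_Cderive_AbsRing in Hg; exact (is_derive_comp f g z df dg Hf Hg). Qed.

Lemma is_Cderive_Cexp (z : C) : is_Cderive Cexp z (Cexp z).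
Proof.
split; [apply is_linear_scal_l|].
intros x Hx.
apply (is_filter_lim_locally_unique (K := C_AbsRing) (V := AbsRing_NormedModule C_AbsRing)) in Hx.
subst x; intros eps.
set (M := exp (Re z)); assert (HM : 0 < M) by apply exp_pos.
assert (Hdelta : 0 < Rmin (/ 2) (eps / (5 * M))).
{ apply Rmin_pos; [lra|]; apply Rdiv_lt_0_compat; [apply cond_pos | lra]. }
exists (mkposreal _ Hdelta); intros y Hy.
change (Cmod (y - z)%C < Rmin (/ 2) (eps / (5 * M))) in Hy.
change (Cmod ((Cexp y - Cexp z) - (y - z) * Cexp z)%C <= eps * Cmod (y - z)%C).
set (h := (y - z)%C) in *.
replace y with (z + h)%C by (unfold h; ring).
rewrite Cexp_add.
replace (Cexp z * Cexp h - Cexp z - h * Cexp z)%C with (Cexp z * (Cexp h - 1 - h))%C by ring.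
rewrite Cmod_mult, Cmod_Cexp; fold M.
assert (Hh1 := Rlt_le _ _ (Rlt_le_trans _ _ _ Hy (Rmin_l _ _))).
assert (Hh2 := Rlt_le _ _ (Rlt_le_trans _ _ _ Hy (Rmin_r _ _))).
assert (Htaylor := Cexp_sub_1_sub_le h Hh1).
assert (H5 : 5 * M * Cmod h <= eps).
{ apply (Rmult_le_compat_l (5 * M)) in Hh2; [|lra].
  replace (5 * M * (eps / (5 * M))) with (pos eps) in Hh2 by (field; lra); exact Hh2. }
assert (M * Cmod (Cexp h - 1 - h) <= M * (5 * Cmod h ^ 2)) by (apply Rmult_le_compat_l; lra).
generalize (Cmod_ge_0 h); nra.
Qed.

Lemma is_Cderive_Cexp_comp (g : C -> C) (z dg : C) :
  is_Cderive g z dg -> is_Cderive (fun t => Cexp (g t)) z (dg * Cexp (g z))%C.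
Proof. intros Hg; apply is_Cderive_comp; [apply is_Cderive_Cexp | exact Hg]. Qed.

Lemma is_Cderive_Cexp_opp (z : C) : is_Cderive (fun t => Cexp (- t)) z (- Cexp (- z))%C.
Proof.
replace (- Cexp (- z))%C with (- RtoC 1 * Cexp (- z))%C by ring.
apply (is_Cderive_Cexp_comp (fun t => - t)%C), is_Cderive_opp, is_Cderive_id.
Qed.

Lemma is_Cderive_Csinh (z : C) : is_Cderive Csinh z (Ccosh z).
Proof.
assert (H2 : RtoC 2 <> 0) by (intros H; injection H; lra).
apply (is_Cderive_ext (fun t => / 2 * (Cexp t + - Cexp (- t)))%C);
  [intros t; unfold Csinh; field; exact H2|].
replace (Ccosh z) with (/ 2 * (Cexp z + - - Cexp (- z)))%C by (unfold Ccosh; field; exact H2).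
apply is_Cderive_scal, is_Cderive_plus, is_Cderive_opp;
  [apply is_Cderive_Cexp | apply is_Cderive_Cexp_opp].
Qed.

Lemma is_Cderive_Ccosh (z : C) : is_Cderive Ccosh z (Csinh z).
Proof.
assert (H2 : RtoC 2 <> 0) by (intros H; injection H; lra).
apply (is_Cderive_ext (fun t => / 2 * (Cexp t + Cexp (- t)))%C);
  [intros t; unfold Ccosh; field; exact H2|].
replace (Csinh z) with (/ 2 * (Cexp z + - Cexp (- z)))%C by (unfold Csinh; field; exact H2).
apply is_Cderive_scal, is_Cderive_plus; [apply is_Cderive_Cexp | apply is_Cderive_Cexp_opp].
Qed.

Lemma strip_real (d x : R) : 0 < d -> strip d (RtoC x).
Proof. intros Hd; unfold strip; simpl; rewrite Rabs_R0; exact Hd. Qed.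

Lemma strip_locally (d : R) (z : C) :
  strip d z -> locally (T := AbsRing_UniformSpace C_AbsRing) z (strip d).
Proof.
unfold strip; intros Hz.
assert (Hgap : 0 < d - Rabs (Im z)) by lra.
exists (mkposreal _ Hgap); intros t Ht.
change (Cmod (t - z)%C < d - Rabs (Im z)) in Ht.
replace (Im t) with (Im z + Im (t - z)%C) by (unfold Im; simpl; ring).
generalize (Rabs_triang (Im z) (Im (t - z)%C)) (Im_le_Cmod (t - z)%C); lra.
Qed.

(** * A lower bound for [|1 + exp (PI sinh zeta)|] on the strip *)

Lemma Rabs_sin_le_shift (b phi h : R) : 0 <= phi <= PI / 2 -> 0 <= h ->
  Rabs b <= phi + h -> Rabs (sin b) <= sin phi + h * cos phi.
Proof.
intros Hphi Hh Hb.
assert (Hs : 0 <= sin phi) by (apply sin_ge_0; generalize PI2_Rlt_PI; lra).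
assert (Hc : 0 <= cos phi) by (apply cos_ge_0; lra).
replace (Rabs (sin b)) with (Rabs (sin (Rabs b)))
  by (unfold Rabs at 2; destruct (Rcase_abs b); [rewrite sin_neg, Rabs_Ropp|]; reflexivity).
assert (Hb0 := Rabs_pos b); set (be := Rabs b) in *.
destruct (Rle_lt_dec be phi) as [Hle|Hlt].
- rewrite Rabs_pos_eq by (apply sin_ge_0; generalize PI2_Rlt_PI; lra).
  assert (sin be <= sin phi) by (apply sin_incr_1; lra); nra.
- replace be with (phi + (be - phi)) by ring; rewrite sin_plus.
  eapply Rle_trans; [apply Rabs_triang|]; rewrite !Rabs_mult, (Rabs_pos_eq (sin phi)), (Rabs_pos_eq (cos phi)) by lra.
  assert (Rabs (cos (be - phi)) <= 1) by (apply Rabs_le, COS_bound).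
  assert (Rabs (sin (be - phi)) <= be - phi) by (rewrite <- (Rabs_pos_eq (be - phi)) at 2 by lra; apply Rabs_sin_le).
  nra.
Qed.

(* From [cos phi <= PI/2 (1 - s)] and [s <= (1 + s) sin phi] for [phi := PI/2 s]; the
   second one uses [sin phi >= phi - phi^3/6] and [PI^2 / 24 <= 0.4135]. *)
Lemma half_PI_mul_cos_le (s : R) : 0 < s < 1 ->
  PI / 2 * s * cos (PI / 2 * s) <= (PI / 2) ^ 2 * (1 - s ^ 2) * sin (PI / 2 * s).
Proof.
intros Hs; destruct PI_bounds as [Hpi1 Hpi2].
set (phi := PI / 2 * s).
assert (Hphi : 0 < phi < PI / 2) by (unfold phi; split; nra).
assert (Hcos : cos phi <= PI / 2 * (1 - s)).
{ rewrite <- sin_shift; eapply Rle_trans; [apply Rle_abs|]; eapply Rle_trans; [apply Rabs_sin_le|].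
  rewrite Rabs_pos_eq by lra; unfold phi; nra. }
assert (Hsin : s <= (1 + s) * sin phi).
{ assert (Hcubic := sin_ge_cubic phi ltac:(lra)).
  assert (Hpoly : phi - phi ^ 3 / 6 = phi * (1 - PI ^ 2 * s ^ 2 / 24)) by (unfold phi; field).
  assert (PI ^ 2 <= 315 / 100 * (315 / 100)) by nra.
  assert (H1 : 1 - 4135 / 10000 * s ^ 2 <= 1 - PI ^ 2 * s ^ 2 / 24) by nra.
  assert (H2 : 1 <= (1 + s) * (1 - 4135 / 10000 * s ^ 2)) by nra.
  assert (H3 : s <= phi) by (unfold phi; nra).
  assert (H4 : phi * (1 + s) * (1 - 4135 / 10000 * s ^ 2)
               <= phi * (1 + s) * (1 - PI ^ 2 * s ^ 2 / 24))
    by (apply Rmult_le_compat_l; [apply Rmult_le_pos|]; lra).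
  nra. }
assert (0 <= cos phi) by (apply cos_ge_0; lra).
assert (phi * cos phi <= phi * (PI / 2 * (1 - s))) by (apply Rmult_le_compat_l; lra).
assert ((PI / 2) ^ 2 * (1 - s) * s <= (PI / 2) ^ 2 * (1 - s) * ((1 + s) * sin phi))
  by (apply Rmult_le_compat_l; [apply Rmult_le_pos|]; nra).
unfold phi in *; nra.
Qed.

(* With [a := PI/2 sinh x cos y], [b := PI/2 cosh x sin y], [s := sin d], [X := cosh x] and
   [phi := PI/2 s]: [|b| <= phi + phi (X - 1)], hence
   [|sin b| <= sin phi + phi (X - 1) cos phi] by [Rabs_sin_le_shift], while
   [cosh a >= 1 + (PI/2)^2 (X - 1) (1 - s^2)]; [half_PI_mul_cos_le] compares the two. *)
Lemma Rabs_sin_le_cosh_mul (x y d : R) : 0 < d < PI / 2 -> Rabs y < d ->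
  Rabs (sin (PI / 2 * cosh x * sin y)) <= cosh (PI / 2 * sinh x * cos y) * sin (PI / 2 * sin d).
Proof.
intros Hd Hy; apply Rabs_def2 in Hy; destruct PI_bounds as [Hpi1 Hpi2].
set (s := sin d).
assert (Hs : 0 < s < 1) by (split; [apply sin_gt_0 | rewrite <- sin_PI2; apply sin_increasing_1]; lra).
assert (Hsy : Rabs (sin y) <= s).
{ apply Rabs_le; split; [unfold s; rewrite <- sin_neg|]; left; apply sin_increasing_1; lra. }
set (X := cosh x).
assert (HX : 1 <= X) by (unfold X; generalize (cosh_ge_quadratic x) (pow2_ge_0 x); lra).
set (phi := PI / 2 * s).
assert (Hphi : 0 < phi < PI / 2) by (unfold phi; split; nra).
assert (Hsphi : 0 < sin phi) by (apply sin_gt_0; lra).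
assert (Hcphi : 0 <= cos phi) by (apply cos_ge_0; lra).
assert (Hb : Rabs (sin (PI / 2 * X * sin y)) <= sin phi + phi * (X - 1) * cos phi).
{ apply Rabs_sin_le_shift; [lra | nra|].
  rewrite !Rabs_mult, (Rabs_pos_eq (PI / 2)), (Rabs_pos_eq X) by lra.
  assert (PI / 2 * X * Rabs (sin y) <= PI / 2 * X * s)
    by (apply Rmult_le_compat_l; [apply Rmult_le_pos|]; lra).
  unfold phi; nra. }
assert (Ha : 1 + (PI / 2) ^ 2 * (X - 1) * (1 - s ^ 2) <= cosh (PI / 2 * sinh x * cos y)).
{ eapply Rle_trans; [|apply cosh_ge_quadratic].
  assert (Hsq : (PI / 2 * sinh x * cos y) ^ 2 = (PI / 2) ^ 2 * (X ^ 2 - 1) * (1 - sin y ^ 2)).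
  { replace (X ^ 2 - 1) with (sinh x ^ 2) by (unfold X; generalize (cosh_sq_sub_sinh_sq x); lra).
    replace (1 - sin y ^ 2) with (cos y ^ 2) by (generalize (sin2_cos2 y); unfold Rsqr; lra).
    ring. }
  rewrite Hsq.
  assert (sin y ^ 2 <= s ^ 2) by (rewrite <- (pow2_abs (sin y)); generalize (Rabs_pos (sin y)); nra).
  assert (2 * (X - 1) * (1 - s ^ 2) <= (X ^ 2 - 1) * (1 - sin y ^ 2))
    by (apply Rmult_le_compat; nra).
  assert (0 <= (PI / 2) ^ 2) by nra.
  nra. }
assert (Hkey := half_PI_mul_cos_le s Hs); fold phi in Hkey.
assert ((X - 1) * (phi * cos phi) <= (X - 1) * ((PI / 2) ^ 2 * (1 - s ^ 2) * sin phi))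
  by (apply Rmult_le_compat_l; lra).
nra.
Qed.

(* [|1 + E^2 e^(2ib)|^2 = (1 + E^2)^2 - 4 E^2 sin^2 b], and [(1 + E^2) / (2 E) = (E + 1/E) / 2]. *)
Lemma Cmod_1_add_polar_ge (E b phi : R) : 0 < E -> 0 <= cos phi -> 0 <= sin phi ->
  Rabs (sin b) <= (E + / E) / 2 * sin phi ->
  (1 + E ^ 2) * cos phi <= Cmod (1 + E ^ 2 * cos (2 * b), E ^ 2 * sin (2 * b)).
Proof.
intros HE Hc Hs Hb; unfold Cmod; cbn [fst snd].
assert (Hsq : (1 + E ^ 2 * cos (2 * b)) ^ 2 + (E ^ 2 * sin (2 * b)) ^ 2
              = (1 + E ^ 2) ^ 2 - 4 * E ^ 2 * sin b ^ 2).
{ assert (H := sin2_cos2 (2 * b)); unfold Rsqr in H.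
  transitivity (1 + 2 * E ^ 2 * cos (2 * b)
                + E ^ 4 * (sin (2 * b) * sin (2 * b) + cos (2 * b) * cos (2 * b))); [ring|].
  rewrite H, cos_2a_sin; ring. }
rewrite Hsq, <- (sqrt_pow2 ((1 + E ^ 2) * cos phi)) by (apply Rmult_le_pos; nra).
apply sqrt_le_1_alt.
assert (Hk : 0 <= (E + / E) / 2 * sin phi)
  by (apply Rmult_le_pos; [generalize (Rinv_0_lt_compat E HE); lra | lra]).
assert (Hsb : sin b ^ 2 <= ((E + / E) / 2 * sin phi) ^ 2)
  by (rewrite <- (pow2_abs (sin b)); generalize (Rabs_pos (sin b)); nra).
assert (Hid : 4 * E ^ 2 * ((E + / E) / 2) ^ 2 = (1 + E ^ 2) ^ 2) by (field; lra).
replace (((1 + E ^ 2) * cos phi) ^ 2) with ((1 + E ^ 2) ^ 2 * (1 - sin phi ^ 2))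
  by (generalize (sin2_cos2 phi); unfold Rsqr; intros H; replace (1 - sin phi ^ 2) with (cos phi ^ 2) by lra; ring).
assert (4 * E ^ 2 * sin b ^ 2 <= 4 * E ^ 2 * ((E + / E) / 2 * sin phi) ^ 2)
  by (apply Rmult_le_compat_l; nra).
nra.
Qed.

Definition expsinh (z : C) : C := Cexp (RtoC PI * Csinh z).

Definition expsinh_ratio (z : C) : R := Cmod (expsinh z) / Cmod (1 + expsinh z)%C.

Lemma expsinh_polar (x y : R) : expsinh (x, y) =
  (exp (PI / 2 * sinh x * cos y) ^ 2 * cos (2 * (PI / 2 * cosh x * sin y)),
   exp (PI / 2 * sinh x * cos y) ^ 2 * sin (2 * (PI / 2 * cosh x * sin y))).
Proof.
unfold expsinh.
replace (RtoC PI * Csinh (x, y))%C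
  with ((2 * (PI / 2 * sinh x * cos y), 2 * (PI / 2 * cosh x * sin y)) : C).
- unfold Cexp; simpl; rewrite Rmult_1_r, <- exp_plus.
  do 2 f_equal; f_equal; ring.
- unfold Csinh, Cexp, sinh, cosh; apply injective_projections; simpl;
    rewrite cos_neg, sin_neg; field.
Qed.

Lemma Cmod_1_add_expsinh_ge (d : R) (z : C) : 0 < d < PI / 2 -> strip d z ->
  (1 + Cmod (expsinh z)) * cos (PI / 2 * sin d) <= Cmod (1 + expsinh z)%C.
Proof.
intros Hd Hz; destruct z as [x y]; unfold strip in Hz; simpl in Hz.
destruct PI_bounds as [Hpi _].
assert (Hs : 0 < sin d < 1) by (split; [apply sin_gt_0 | rewrite <- sin_PI2; apply sin_increasing_1]; lra).
assert (Hphi : 0 < PI / 2 * sin d < PI / 2) by (split; nra).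
assert (Hb := Rabs_sin_le_cosh_mul x y d Hd Hz).
rewrite expsinh_polar, Cmod_polar by (apply pow_le, Rlt_le, exp_pos).
set (a := PI / 2 * sinh x * cos y) in *; set (b := PI / 2 * cosh x * sin y) in *.
replace (Cplus 1 (exp a ^ 2 * cos (2 * b), exp a ^ 2 * sin (2 * b)))
  with ((1 + exp a ^ 2 * cos (2 * b), exp a ^ 2 * sin (2 * b)) : C)
  by (apply injective_projections; simpl; ring).
apply Cmod_1_add_polar_ge; [apply exp_pos | apply cos_ge_0 | apply sin_ge_0 |]; try lra.
replace ((exp a + / exp a) / 2) with (cosh a) by (unfold cosh; rewrite exp_Ropp; reflexivity).
exact Hb.
Qed.

(** * The constants [ctilde_d] and [exp (PI/12)] *)

Lemma c_le_ctilde (c : R) : 0 < c -> c <= (1 + ln (1 + c)) / ln (1 + c) * c.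
Proof.
intros Hc; assert (HL : 0 < ln (1 + c)) by (rewrite <- ln_1; apply ln_increasing; lra).
replace ((1 + ln (1 + c)) / ln (1 + c) * c) with (c + c / ln (1 + c)) by (field; lra).
generalize (Rdiv_lt_0_compat _ _ Hc HL); lra.
Qed.

(* With [L := ln (1 + c)]: for [r >= L] use [q <= c]; for [r < L] the chord bound
   gives [q L <= e^r - 1 <= r c]. *)
Lemma mul_1_add_le_ctilde (c q r : R) : 0 < c -> q <= c -> 0 <= r -> q <= exp r - 1 ->
  q * (1 + r) <= (1 + ln (1 + c)) / ln (1 + c) * c * r.
Proof.
intros Hc Hqc Hr Hqr.
set (L := ln (1 + c)).
assert (HL : 0 < L) by (unfold L; rewrite <- ln_1; apply ln_increasing; lra).
assert (HeL : exp L = 1 + c) by (unfold L; apply exp_ln; lra).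
apply Rmult_le_reg_r with L; [exact HL|].
replace ((1 + L) / L * c * r * L) with (c * r * (1 + L)) by (field; lra).
destruct (Rle_lt_dec L r) as [HLr|HrL].
- assert (q * (1 + r) <= c * (1 + r)) by (apply Rmult_le_compat_r; lra).
  assert (q * (1 + r) * L <= c * (1 + r) * L) by (apply Rmult_le_compat_r; lra).
  assert (L * (1 + r) <= r * (1 + L)) by nra.
  assert (c * (L * (1 + r)) <= c * (r * (1 + L))) by (apply Rmult_le_compat_l; lra).
  nra.
- assert (Hchord := exp_sub_1_le_chord r L HL ltac:(lra)); rewrite HeL in Hchord.
  assert (q * L <= r * c) by nra.
  assert (q * L * (1 + r) <= r * c * (1 + r)) by (apply Rmult_le_compat_r; lra).
  assert (r * c * (1 + r) <= r * c * (1 + L)) by (apply Rmult_le_compat_l; nra).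
  nra.
Qed.

Lemma Derive_n_exp (n : nat) (x : R) : Derive_n exp n x = exp x.
Proof.
revert x; induction n as [|n IH]; intros x; [reflexivity|]; simpl.
rewrite (Derive_ext _ _ x IH); apply is_derive_unique, is_derive_Reals, derivable_pt_lim_exp.
Qed.

Lemma exp_le_taylor8 (z : R) : 0 < z ->
  exp z <= 1 + z + z ^ 2 / 2 + z ^ 3 / 6 + z ^ 4 / 24 + z ^ 5 / 120 + z ^ 6 / 720
           + z ^ 7 / 5040 + z ^ 8 / 40320 + z ^ 9 / 362880 * exp z.
Proof.
intros Hz.
destruct (Taylor_Lagrange exp 8 0 z Hz) as [c [Hc Htaylor]].
{ intros t _ k _; destruct k as [|k]; [exact I|]; simpl.
  apply (ex_derive_ext exp); [intros u; symmetry; apply Derive_n_exp|].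
  eexists; apply is_derive_Reals, derivable_pt_lim_exp. }
rewrite Htaylor at 1; cbn [sum_f_R0]; rewrite !Derive_n_exp, exp_0, !Rminus_0_r.
unfold Factorial.fact; rewrite !mult_INR; simpl INR.
assert (exp c <= exp z) by (apply Rlt_le, exp_increasing; lra).
assert (0 <= z ^ 9) by (apply pow_le; lra).
assert (z ^ 9 / 362880 * exp c <= z ^ 9 / 362880 * exp z) by (apply Rmult_le_compat_l; lra).
match goal with |- ?L <= _ => replace L with (1 + z + z ^ 2 / 2 + z ^ 3 / 6 + z ^ 4 / 24
  + z ^ 5 / 120 + z ^ 6 / 720 + z ^ 7 / 5040 + z ^ 8 / 40320 + z ^ 9 / 362880 * exp c) by field end.
lra.
Qed.

(* [z * exp_gap_poly z = (1 + z) (1 - z^9/9!) - T8 z * (1 - 299/1000 z)], where [T8] is the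
   Taylor polynomial of [exp] of degree 8 appearing in [exp_le_taylor8]. *)
Definition exp_gap_poly (z : R) : R :=
  299 / 1000 - 201 / 1000 * z - 103 / 6000 * z ^ 2 + 49 / 6000 * z ^ 3 + 33 / 8000 * z ^ 4
  + 397 / 360000 * z ^ 5 + 1093 / 5040000 * z ^ 6 + 29 / 840000 * z ^ 7
  + 1691 / 362880000 * z ^ 8 - 1 / 362880 * z ^ 9.

Lemma pow_bound (u r : R) (n : nat) : Rabs u <= r -> - r ^ n <= u ^ n <= r ^ n.
Proof.
intros Hu; apply Rabs_le_between; rewrite <- RPow_abs.
apply pow_incr; split; [apply Rabs_pos | exact Hu].
Qed.

(* Proves [0 < P z] for a polynomial [P] of degree at most 9 when [|z - c| <= r], by
   expanding [P] around [c] and bounding each power of [z - c] by the matching power of [r]. *)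
Ltac poly_pos_near c r :=
  match goal with |- 0 < ?P ?z =>
    let u := fresh "u" in
    let Hu := fresh "Hu" in
    assert (Hu : Rabs (z - c) <= r) by (apply Rabs_le; lra);
    set (u := z - c) in Hu; replace z with (c + u) by (unfold u; ring);
    unfold P; ring_simplify;
    generalize (pow_bound u r 2 Hu) (pow_bound u r 3 Hu) (pow_bound u r 4 Hu)
      (pow_bound u r 5 Hu) (pow_bound u r 6 Hu) (pow_bound u r 7 Hu)
      (pow_bound u r 8 Hu) (pow_bound u r 9 Hu);
    simpl; clearbody u; apply Rabs_le_between in Hu; lra
  end.

Lemma exp_gap_poly_pos (z : R) : 0 <= z <= 3345 / 1000 -> 0 < exp_gap_poly z.
Proof.
intros Hz.
destruct (Rle_lt_dec z 1); [poly_pos_near (1 / 2) (1 / 2)|].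
destruct (Rle_lt_dec z (3 / 2)); [poly_pos_near (5 / 4) (1 / 4)|].
destruct (Rle_lt_dec z (13 / 8)); [poly_pos_near (25 / 16) (1 / 16)|].
destruct (Rle_lt_dec z (7 / 4)); [poly_pos_near (27 / 16) (1 / 16)|].
destruct (Rle_lt_dec z (15 / 8)); [poly_pos_near (29 / 16) (1 / 16)|].
destruct (Rle_lt_dec z 2); [poly_pos_near (31 / 16) (1 / 16)|].
destruct (Rle_lt_dec z (9 / 4)); [poly_pos_near (17 / 8) (1 / 8)|].
destruct (Rle_lt_dec z (5 / 2)); [poly_pos_near (19 / 8) (1 / 8)|].
destruct (Rle_lt_dec z 3); [poly_pos_near (11 / 4) (1 / 4)|].
poly_pos_near (1269 / 400) (69 / 400).
Qed.

Lemma exp_mul_1_sub_le (z : R) : 0 < z -> exp z * (1 - 299 / 1000 * z) <= 1 + z.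
Proof.
intros Hz.
destruct (Rle_lt_dec (1000 / 299) z) as [Hbig|Hsmall].
{ assert (1 - 299 / 1000 * z <= 0) by lra; generalize (exp_pos z); nra. }
set (T8 := 1 + z + z ^ 2 / 2 + z ^ 3 / 6 + z ^ 4 / 24 + z ^ 5 / 120 + z ^ 6 / 720
           + z ^ 7 / 5040 + z ^ 8 / 40320).
set (rem := z ^ 9 / 362880).
assert (Htaylor : exp z <= T8 + rem * exp z) by (apply exp_le_taylor8, Hz).
assert (Hrem : 0 <= rem < 1).
{ unfold rem; split; [apply Rmult_le_pos; [apply pow_le|]; lra|].
  assert (z ^ 9 <= (3345 / 1000) ^ 9) by (apply pow_incr; lra); lra. }
assert (Hgap : (1 + z) * (1 - rem) - T8 * (1 - 299 / 1000 * z) = z * exp_gap_poly z)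
  by (unfold rem, T8, exp_gap_poly; field).
assert (0 < z * exp_gap_poly z) by (apply Rmult_lt_0_compat; [|apply exp_gap_poly_pos]; lra).
assert (exp z * (1 - rem) * (1 - 299 / 1000 * z) <= T8 * (1 - 299 / 1000 * z))
  by (apply Rmult_le_compat_r; lra).
apply Rmult_le_reg_r with (1 - rem); nra.
Qed.

Lemma mul_1_sub_exp_neg_le (z : R) : 0 < z -> (1 + z) * (1 - exp (- z)) <= 1299 / 1000 * z.
Proof.
intros Hz; assert (HE := exp_pos z).
rewrite exp_Ropp; apply Rmult_le_reg_r with (exp z); [exact HE|].
replace ((1 + z) * (1 - / exp z) * exp z) with ((1 + z) * exp z - (1 + z)) by (field; lra).
generalize (exp_mul_1_sub_le z Hz); nra.
Qed.

Lemma exp_PI_div_12_ge : 1299 / 1000 <= exp (PI / 12).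
Proof.
destruct PI_bounds as [Hpi _].
apply Rle_trans with (exp (314 / 1200)).
- eapply Rle_trans; [|apply (exp_ge_taylor (314 / 1200) 4); lra]; simpl; lra.
- apply Rlt_le, exp_increasing; lra.
Qed.

(** * Estimate of the transformed function *)

(* When [1 + z = 0] the left factor [|z / (1 + z)|^(alpha-1)] of the growth bound degenerates
   to [exp ((alpha-1) ln 0) = 1], which is why [q <= c] is needed besides the main hypothesis. *)
Lemma ln_le_ln_Cmod_div (c q : R) (z : C) : 0 < q -> z <> 0 -> q <= c ->
  q * (1 + Cmod z) <= c * Cmod z -> ln q <= ln c + ln (Cmod (z / (1 + z))%C).
Proof.
intros Hq Hz Hqc Hmain.
destruct (Ceq_dec (1 + z)%C 0) as [H0|H0].
- rewrite H0, Cdiv_0_r, Cmod_0, ln_0, Rplus_0_r; apply ln_le; lra.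
- assert (Hz1 : 0 < Cmod (1 + z)%C) by (apply Cmod_gt_0, H0).
  assert (Hz0 : 0 < Cmod z) by (apply Cmod_gt_0, Hz).
  rewrite Cmod_div by exact H0.
  rewrite <- ln_mult by (try apply Rdiv_lt_0_compat; lra); apply ln_le; [lra|].
  assert (Htri : Cmod (1 + z)%C <= 1 + Cmod z)
    by (eapply Rle_trans; [apply Cmod_triangle | rewrite Cmod_1; lra]).
  apply Rmult_le_reg_r with (Cmod (1 + z)%C); [exact Hz1|].
  replace (c * (Cmod z / Cmod (1 + z)%C) * Cmod (1 + z)%C) with (c * Cmod z) by (field; lra).
  assert (q * Cmod (1 + z)%C <= q * (1 + Cmod z)) by (apply Rmult_le_compat_l; lra).
  lra.
Qed.

(* After factoring out [k K P^(-beta)] the claim is [q rho^(alpha-1) <= c^(1-alpha) q^alpha],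
   i.e. [(q / (c rho))^(1-alpha) <= 1]. *)
Lemma LDE_weight_bound (K alpha beta c q rho P k A : R) :
  0 < K -> 0 < alpha <= 1 -> 0 < c -> 0 < q -> 0 < P -> 0 <= k -> 0 <= A ->
  A <= K * (exp ((alpha - 1) * ln rho) * exp (- (beta * ln P))) ->
  ln q <= ln c + ln rho ->
  A * (k * q) <= k / 2 * (2 * Rpower c (1 - alpha) * K) /
                 (Rpower (/ q) (2 * alpha / 2) * Rpower P (2 * beta / 2)).
Proof.
intros HK Ha Hc Hq HP Hk HA HAb Hln.
replace (2 * alpha / 2) with alpha by field; replace (2 * beta / 2) with beta by field.
unfold Rpower; rewrite ln_Rinv by exact Hq.
replace (k / 2 * (2 * exp ((1 - alpha) * ln c) * K) /
         (exp (alpha * - ln q) * exp (beta * ln P)))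
  with (k * K * exp ((1 - alpha) * ln c + alpha * ln q - beta * ln P)).
2:{ rewrite !Rminus_def, !exp_plus, exp_Ropp.
    replace (alpha * - ln q) with (- (alpha * ln q)) by ring; rewrite exp_Ropp.
    field; split; apply Rgt_not_eq, exp_pos. }
rewrite <- (exp_ln q Hq) at 1.
eapply Rle_trans; [apply Rmult_le_compat_r; [apply Rmult_le_pos; [lra | apply Rlt_le, exp_pos] | exact HAb]|].
replace (K * (exp ((alpha - 1) * ln rho) * exp (- (beta * ln P))) * (k * exp (ln q)))
  with (k * K * exp ((alpha - 1) * ln rho - beta * ln P + ln q))
  by (rewrite Rminus_def, !exp_plus; ring).
apply Rmult_le_compat_l; [nra|].
apply exp_le_compat.
assert ((1 - alpha) * ln q <= (1 - alpha) * (ln c + ln rho)) by (apply Rmult_le_compat_l; lra).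
lra.
Qed.

Lemma LDE_weight_real (L a b x : R) :
  PI / 2 * L * Cmod (Ccosh (RtoC x)) /
    (Rpower (Cmod (1 + Cexp (- (RtoC PI * Csinh (RtoC x))))) a *
     Rpower (Cmod (1 + Cexp (RtoC PI * Csinh (RtoC x)))) b)
  = PI / 2 * L * cosh x /
    (Rpower (1 + exp (- (PI * sinh x))) a * Rpower (1 + exp (PI * sinh x)) b).
Proof.
assert (Hcosh : Ccosh (RtoC x) = RtoC (cosh x)).
{ unfold Ccosh, Cexp, cosh; apply injective_projections; simpl;
    rewrite ?cos_neg, ?sin_neg, ?cos_0, ?sin_0; field. }
assert (Hsinh : Csinh (RtoC x) = RtoC (sinh x)).
{ unfold Csinh, Cexp, sinh; apply injective_projections; simpl;
    rewrite ?cos_neg, ?sin_neg, ?cos_0, ?sin_0; field. }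
rewrite Hcosh, Hsinh, <- RtoC_mult, <- RtoC_opp, !Cexp_real, <- !RtoC_plus, !Cmod_R.
rewrite !Rabs_pos_eq; [reflexivity | | |]; left; try apply cosh_pos;
  generalize (exp_pos (PI * sinh x)) (exp_pos (- (PI * sinh x))); lra.
Qed.

Section DE_psi.

Variables (d : R) (psi psi' : C -> C).
Hypothesis Hpsi : is_DE_psi d psi psi'.

(* Differentiate [Cexp (psi t) = 1 + expsinh t] near [z] and divide by [Cexp (psi z)]. *)
Lemma DE_psi'_eq (z : C) : strip d z ->
  psi' z = (RtoC PI * Ccosh z * expsinh z * Cexp (- psi z))%C.
Proof.
destruct Hpsi as [Hexp [_ Hder]]; intros Hz.
assert (Hlhs := is_Cderive_Cexp_comp psi z (psi' z) (Hder z Hz)).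
assert (Hrhs := is_Cderive_plus _ _ z _ _ (is_Cderive_const 1 z)
  (is_Cderive_Cexp_comp _ z _ (is_Cderive_scal (RtoC PI) _ z _ (is_Cderive_Csinh z)))).
apply (is_derive_ext_loc _ (fun t => Cexp (psi t))) in Hrhs;
  [|apply (filter_imp (strip d)); [|exact (strip_locally d z Hz)];
    intros t Ht; simpl; rewrite <- (Hexp t Ht); reflexivity].
apply is_C_derive_unique in Hlhs; apply is_C_derive_unique in Hrhs.
rewrite Hlhs in Hrhs.
transitivity (psi' z * Cexp (psi z) * Cexp (- psi z))%C.
- rewrite <- Cmult_assoc, (Cmult_comm (Cexp (psi z))), Cexp_opp_mul; ring.
- rewrite Hrhs; unfold expsinh; ring.
Qed.

Lemma DE_transform_analytic (f : C -> C) : analytic_on (image_strip d psi) f ->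
  analytic_on (strip d) (fun zeta => (f (psi zeta) * psi' zeta)%C).
Proof.
intros Hf z Hz.
assert (Hder := proj2 (proj2 Hpsi)).
destruct (Hf (psi z)) as [df Hdf]; [exists z; split; [exact Hz | reflexivity]|].
assert (Hpsi' : exists l, is_Cderive psi' z l).
{ assert (Hformula : exists l, is_Cderive
    (fun t => RtoC PI * Ccosh t * Cexp (RtoC PI * Csinh t) * Cexp (- psi t))%C z l).
  { eexists; apply is_Cderive_mult; [apply is_Cderive_mult; [apply is_Cderive_mult|]|].
    - apply is_Cderive_const.
    - apply is_Cderive_Ccosh.
    - apply is_Cderive_Cexp_comp, is_Cderive_scal, is_Cderive_Csinh.
    - apply is_Cderive_Cexp_comp, is_Cderive_opp, Hder, Hz. }
  destruct Hformula as [l Hl]; exists l.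
  eapply is_derive_ext_loc; [|exact Hl].
  apply (filter_imp (strip d)); [|exact (strip_locally d z Hz)].
  intros t Ht; symmetry; apply (DE_psi'_eq t Ht). }
destruct Hpsi' as [l Hl].
eexists; apply is_Cderive_mult; [|exact Hl].
apply is_Cderive_comp; [exact Hdf | apply Hder, Hz].
Qed.

Lemma Cmod_1_add_expsinh_eq (z : C) : strip d z -> Cmod (1 + expsinh z)%C = exp (Re (psi z)).
Proof. intros Hz; unfold expsinh; rewrite <- (proj1 Hpsi z Hz); apply Cmod_Cexp. Qed.

Lemma expsinh_ratio_pos (z : C) : strip d z -> 0 < expsinh_ratio z.
Proof.
intros Hz; unfold expsinh_ratio; rewrite Cmod_1_add_expsinh_eq by exact Hz.
apply Rdiv_lt_0_compat; [apply Cmod_gt_0, Cexp_neq0 | apply exp_pos].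
Qed.

Lemma expsinh_ratio_eq (z : C) : strip d z -> expsinh_ratio z = Cmod (1 - Cexp (- psi z))%C.
Proof.
intros Hz; unfold expsinh_ratio; rewrite Cmod_1_add_expsinh_eq by exact Hz.
assert (Hexp := proj1 Hpsi z Hz); fold (expsinh z) in Hexp.
replace (1 - Cexp (- psi z))%C with (expsinh z * Cexp (- psi z))%C.
- rewrite Cmod_mult, Cmod_Cexp; rewrite Re_opp, exp_Ropp; reflexivity.
- symmetry; transitivity (Cexp (- psi z) * Cexp (psi z) - Cexp (- psi z))%C;
    [rewrite Cexp_opp_mul; reflexivity | rewrite Hexp; unfold expsinh; ring].
Qed.

Lemma DE_psi_neq0 (z : C) : strip d z -> psi z <> 0.
Proof.
intros Hz H0; apply (Cexp_neq0 (RtoC PI * Csinh z)).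
assert (Hexp := proj1 Hpsi z Hz); rewrite H0, Cexp_0 in Hexp.
replace (Cexp (RtoC PI * Csinh z)) with ((1 + Cexp (RtoC PI * Csinh z)) - 1)%C by ring.
rewrite <- Hexp; ring.
Qed.

Lemma expsinh_ratio_le_ctilde (z : C) : 0 < d < PI / 2 -> strip d z ->
  expsinh_ratio z <= ctilde_d d /\
  expsinh_ratio z * (1 + Cmod (psi z)) <= ctilde_d d * Cmod (psi z).
Proof.
intros Hd Hz; destruct PI_bounds as [Hpi _].
set (kappa := cos (PI / 2 * sin d)).
assert (Hs : 0 < sin d < 1) by (split; [apply sin_gt_0 | rewrite <- sin_PI2; apply sin_increasing_1]; lra).
assert (Hk : 0 < kappa) by (apply cos_gt_0; nra).
assert (Hcd : c_d d = 1 + / kappa) by (unfold c_d; fold kappa; unfold Rdiv; ring).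
assert (Hik : 0 < / kappa) by (apply Rinv_0_lt_compat, Hk).
assert (Hq := expsinh_ratio_pos z Hz).
assert (Hqc : expsinh_ratio z <= c_d d).
{ assert (Hlb := Cmod_1_add_expsinh_ge d z Hd Hz); fold kappa in Hlb.
  assert (HP : 0 < Cmod (1 + expsinh z)%C) by (rewrite Cmod_1_add_expsinh_eq by exact Hz; apply exp_pos).
  assert (HW := Cmod_ge_0 (expsinh z)).
  rewrite Hcd; unfold expsinh_ratio.
  apply Rmult_le_reg_r with (Cmod (1 + expsinh z)%C); [exact HP|].
  replace (Cmod (expsinh z) / Cmod (1 + expsinh z)%C * Cmod (1 + expsinh z)%C)
    with (Cmod (expsinh z)) by (field; lra).
  apply Rmult_le_reg_l with kappa; [exact Hk|].
  replace (kappa * ((1 + / kappa) * Cmod (1 + expsinh z)%C))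
    with ((1 + kappa) * Cmod (1 + expsinh z)%C) by (field; lra).
  generalize (COS_bound (PI / 2 * sin d)); fold kappa; nra. }
assert (Hqr : expsinh_ratio z <= exp (Cmod (psi z)) - 1).
{ rewrite expsinh_ratio_eq, <- (Cmod_opp (psi z)) by exact Hz; apply Cmod_1_sub_Cexp_le. }
assert (Hc : 0 < c_d d) by lra.
split.
- eapply Rle_trans; [exact Hqc | unfold ctilde_d; apply c_le_ctilde, Hc].
- unfold ctilde_d; apply mul_1_add_le_ctilde; [exact Hc | exact Hqc | apply Cmod_ge_0 | exact Hqr].
Qed.

Lemma expsinh_ratio_real (x : R) : 0 < d ->
  expsinh_ratio (RtoC x) <= exp (PI / 12) /\
  expsinh_ratio (RtoC x) * (1 + Cmod (psi (RtoC x))) <= exp (PI / 12) * Cmod (psi (RtoC x)).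
Proof.
intros Hd; assert (Hz := strip_real d x Hd).
set (z0 := ln (1 + exp (PI * sinh x))).
assert (Hz0 : 0 < z0) by (unfold z0; rewrite <- ln_1; apply ln_increasing; generalize (exp_pos (PI * sinh x)); lra).
assert (Hpsi0 : psi (RtoC x) = RtoC z0) by apply (proj1 (proj2 Hpsi)).
assert (Hq : expsinh_ratio (RtoC x) = 1 - exp (- z0)).
{ rewrite expsinh_ratio_eq, Hpsi0, <- RtoC_opp, Cexp_real, <- RtoC_minus, Cmod_R by exact Hz.
  apply Rabs_pos_eq; rewrite <- exp_0 at 1; generalize (exp_increasing (- z0) 0); lra. }
rewrite Hq, Hpsi0, Cmod_R, Rabs_pos_eq by lra.
assert (HC := exp_PI_div_12_ge); assert (Hnum := mul_1_sub_exp_neg_le z0 Hz0).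
generalize (exp_pos (- z0)); split; nra.
Qed.

Section Growth.

Variables (f : C -> C) (K beta alpha : R).
Hypotheses (hK : 0 < K) (halpha : 0 < alpha <= 1).
Hypothesis Hbound : forall z, image_strip d psi z ->
  Cmod (f z) <= K * Cmod (Cppow (z / (1 + z))%C (RtoC (alpha - 1)) * Cexp (- (RtoC beta * z))).

Lemma DE_transform_le (c : R) (z : C) : 0 < c -> strip d z ->
  expsinh_ratio z <= c -> expsinh_ratio z * (1 + Cmod (psi z)) <= c * Cmod (psi z) ->
  Cmod (f (psi z) * psi' z)%C <=
    PI / 2 * (2 * Rpower c (1 - alpha) * K) * Cmod (Ccosh z) /
    (Rpower (Cmod (1 + Cexp (- (RtoC PI * Csinh z)))) (2 * alpha / 2) *
     Rpower (Cmod (1 + Cexp (RtoC PI * Csinh z))) (2 * beta / 2)).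
Proof.
intros Hc Hz Hqc Hmain.
assert (Hq := expsinh_ratio_pos z Hz).
assert (HP := Cmod_1_add_expsinh_eq z Hz).
rewrite Cmod_1_add_Cexp_opp, (DE_psi'_eq z Hz); fold (expsinh z).
replace (Cmod (1 + expsinh z)%C / Cmod (expsinh z)) with (/ expsinh_ratio z)
  by (unfold expsinh_ratio; rewrite HP; field; split;
      [apply Rgt_not_eq, Cmod_gt_0, Cexp_neq0 | apply Rgt_not_eq, exp_pos]).
replace (Cmod (f (psi z) * (RtoC PI * Ccosh z * expsinh z * Cexp (- psi z)))%C)
  with (Cmod (f (psi z)) * (PI * Cmod (Ccosh z) * expsinh_ratio z)).
2:{ unfold expsinh_ratio; rewrite HP, !Cmod_mult, Cmod_R, Cmod_Cexp, Rabs_pos_eq by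
      (generalize PI_RGT_0; lra); rewrite Re_opp, exp_Ropp; unfold Rdiv; ring. }
replace (PI / 2 * (2 * Rpower c (1 - alpha) * K) * Cmod (Ccosh z))
  with (PI * Cmod (Ccosh z) / 2 * (2 * Rpower c (1 - alpha) * K)) by (unfold Rdiv; ring).
apply LDE_weight_bound with (rho := Cmod (psi z / (1 + psi z))%C); try assumption.
- rewrite Cmod_1_add_expsinh_eq by exact Hz; apply exp_pos.
- generalize PI_RGT_0 (Cmod_ge_0 (Ccosh z)); nra.
- apply Cmod_ge_0.
- rewrite Cmod_1_add_expsinh_eq, ln_exp by exact Hz.
  eapply Rle_trans; [apply Hbound; exists z; split; [exact Hz | reflexivity]|].
  rewrite Cmod_mult, Cmod_Cppow, Cmod_Cexp, Re_opp, re_mult, re_RtoC, im_RtoC; right; do 3 f_equal; ring.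
- apply ln_le_ln_Cmod_div; [exact Hq | apply DE_psi_neq0, Hz | exact Hqc | exact Hmain].
Qed.

End Growth.

End DE_psi.

Theorem lemma11 (d : R) (hd : 0 < d < PI / 2)
  (psi psi' : C -> C) (Hpsi : is_DE_psi d psi psi')
  (f : C -> C) (K beta alpha : R)
  (hK : 0 < K) (hbeta : 0 < beta) (halpha : 0 < alpha <= 1)
  (Hf : analytic_on (image_strip d psi) f)
  (Hbound : forall z, image_strip d psi z ->
     Cmod (f z) <=
       K * Cmod (Cppow (z / (1 + z))%C (RtoC (alpha - 1)) *
                 Cexp (- (RtoC beta * z)))) :
  LDE (2 * Rpower (ctilde_d d) (1 - alpha) * K)
      (2 * Rpower (exp (PI / 12)) (1 - alpha) * K)
      (2 * alpha) (2 * beta) d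
      (fun zeta => (f (psi zeta) * psi' zeta)%C).
Proof.
split; [exact (DE_transform_analytic d psi psi' Hpsi f Hf)|split].
- intros zeta Hz.
  destruct (expsinh_ratio_le_ctilde d psi psi' Hpsi zeta hd Hz) as [Hqc Hmain].
  apply (DE_transform_le d psi psi' Hpsi f K beta alpha); try assumption.
  eapply Rlt_le_trans; [apply (expsinh_ratio_pos d psi psi' Hpsi zeta Hz) | exact Hqc].
- intros x; rewrite <- LDE_weight_real.
  destruct (expsinh_ratio_real d psi psi' Hpsi x (proj1 hd)) as [Hqc Hmain].
  apply (DE_transform_le d psi psi' Hpsi f K beta alpha); try assumption.
  + apply exp_pos.
  + apply strip_real, hd.
Qed.
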